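(* Let $\sigma_0,\sigma_1,\dots,\sigma_6$ be linearly independent real bivariate polynomials, each of exact degree $k$ and without multiple factors. Then there is a polynomial $\sigma$ in the linear span of $\sigma_1,\dots,\sigma_6$ which has no multiple factors and differs from $\sigma_0$ by a factor of degree at least three, i.e. $\sigma=\gamma r$ and $\sigma_0=\gamma_0 r$ with $\gamma,\gamma_0$ relatively prime and $\deg\gamma_0\ge3$.
   Context: A polynomial has a multiple factor if it is divisible by $r^2$ for some polynomial $r$ of degree $\ge1$. *)

From HB Require Import structures.
From mathcomp Require Import all_boot all_order all_algebra.
From mathcomp Require Import reals.
From mathcomp Require Import mpoly.
Set Implicit Arguments. Unset Strict Implicit. Unset Printing Implicit Defensive.
Import GRing.Theory.
Local Open Scope ring_scope.

(* total degree of a bivariate polynomial (degree of 0 is 0 by convention) *)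
Definition tdeg (R : realType) (p : {mpoly R[2]}) : nat := (msize p).-1.

Definition mdvd (R : realType) (d p : {mpoly R[2]}) : Prop :=
  exists q : {mpoly R[2]}, p = q * d.

Definition has_multiple_factor (R : realType) (p : {mpoly R[2]}) : Prop :=
  exists r : {mpoly R[2]}, (1 <= tdeg r)%N /\ mdvd (r ^+ 2) p.

Definition rel_prime (R : realType) (p q : {mpoly R[2]}) : Prop :=
  forall d : {mpoly R[2]}, mdvd d p -> mdvd d q -> tdeg d = 0%N.

Definition lin_indep (R : realType) (m : nat) (s : 'I_m -> {mpoly R[2]}) : Prop :=
  forall c : 'I_m -> R, \sum_(i < m) c i *: s i = 0 -> forall i, c i = 0.

From HB Require Import structures.
From mathcomp Require Import all_boot all_order all_algebra.
From mathcomp Require Import reals.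
From mathcomp Require Import mpoly.
From Stdlib Require Import Classical Wf_nat.
From mathcomp Require Import zify ring.
Set Implicit Arguments. Unset Strict Implicit.
Import GRing.Theory Num.Theory.
Local Open Scope ring_scope.

(* The proof follows the natural argument.
   1. Let g be a common divisor of s_0, ..., s_6 of maximal degree and write
      s_0 = g H.  Then deg H >= 3: otherwise H and the six cofactors s_i / g
      would be seven polynomials of degree <= 2, hence linearly dependent
      (that space has dimension 6), and so would the s_i.
   2. For each irreducible factor x of H, the combinations sigma of
      s_1, ..., s_6 divisible by g x form a proper subspace (by maximality of
      g).  A vector space is not a finite union of proper subspaces, so some
      q in the span avoids all of them.
   3. With p = s_1, the pencil p + m q (m = 0, 1, 2, ...) meets each of these
      subspaces at most once, and each irreducible f can be a square factor of
      at most one member; such an f must divide a nonzero Wronskian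
      p d_i q - d_i p q.  Hence some member sigma is squarefree and avoids
      all the subspaces (unless q is proportional to p, when sigma = p works).
   4. For such sigma = g W, the cofactors W and H share no irreducible factor,
      so the greatest common divisor r of sigma and s_0 divides g and
      s_0 / r is a multiple of H, of degree >= 3.
   Since R[x,y] is not known to the library as a factorial ring, the file first
   proves that irreducible polynomials are prime there, via Gauss's lemma in
   F[x][y]; the remaining sections follow the four steps above. *)

Lemma measure_ind (T : Type) (m : T -> nat) (P : T -> Prop) :
  (forall x, (forall y, (m y < m x)%N -> P y) -> P x) -> forall x, P x.
Proof.
move=> IH; apply: (well_founded_ind (well_founded_ltof T m)) => x IHx.
by apply: IH => y /ltP; apply: IHx.
Qed.

Lemma ex_minP (T : Type) (m : T -> nat) (P : T -> Prop) :
  (exists x, P x) -> exists x, P x /\ forall y, P y -> (m x <= m y)%N.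
Proof.
move=> [x]; elim/(@measure_ind _ m): x => x IH Px.
case: (classic (exists y, P y /\ (m y < m x)%N)) => [[y [Py lt_yx]]|no_less].
  exact: IH lt_yx Py.
exists x; split=> // y Py; rewrite leqNgt; apply/negP => lt_yx.
by apply: no_less; exists y.
Qed.

Lemma ex_maxP (T : Type) (m : T -> nat) (P : T -> Prop) (B : nat) :
  (exists x, P x) -> (forall x, P x -> (m x <= B)%N) ->
  exists x, P x /\ forall y, P y -> (m y <= m x)%N.
Proof.
move=> exP bounded; have [x [Px minx]] := ex_minP (fun y => B - m y)%N exP.
exists x; split=> // y Py.
by have := minx y Py; have := bounded _ Py; have := bounded _ Px; lia.
Qed.

Lemma pigeonhole_avoid (n N : nat) (P : nat -> nat -> Prop) : (n < N)%N ->
  (forall j m m', (j < n)%N -> (m < N)%N -> (m' < N)%N ->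
     P j m -> P j m' -> m = m') ->
  exists m, (m < N)%N /\ forall j, (j < n)%N -> ~ P j m.
Proof.
move=> lt_nN once; apply: NNPP => all_bad.
have bad (m : 'I_N) : exists j : 'I_n, P j m.
  apply: NNPP => no_j; apply: all_bad; exists m; split=> // j lt_jn Pjm.
  by apply: no_j; exists (Ordinal lt_jn).
have [f Pf] := fin_all_exists bad.
have f_inj : injective f.
  move=> m m' eq_f; apply: val_inj.
  apply: (once (f m) _ _ (ltn_ord _) (ltn_ord m) (ltn_ord m') (Pf m)).
  by rewrite eq_f; exact: Pf.
by have := leq_card f f_inj; rewrite !card_ord; lia.
Qed.

Section Divisibility.
Variable T : comPzRingType.
Implicit Types d p q : T.

(* Divisibility in a commutative ring, as a proposition; [mdvd] from the
   statement is its instance for R[x,y]. *)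
Definition dvdr d p : Prop := exists q, p = q * d.

Lemma dvdr_refl p : dvdr p p.
Proof. by exists 1; rewrite mul1r. Qed.

Lemma dvdr_trans d p q : dvdr d p -> dvdr p q -> dvdr d q.
Proof. by move=> [a ->] [b ->]; exists (b * a); rewrite mulrA. Qed.

Lemma dvdr_mull d p q : dvdr d p -> dvdr d (q * p).
Proof. by move=> [a ->]; exists (q * a); rewrite mulrA. Qed.

Lemma dvdr_mulr d p q : dvdr d p -> dvdr d (p * q).
Proof. by rewrite mulrC; apply: dvdr_mull. Qed.

Lemma dvd1r p : dvdr 1 p.
Proof. by exists p; rewrite mulr1. Qed.

Lemma dvdr_mulIr d p : dvdr d (p * d).
Proof. by exists p. Qed.

Lemma dvdr_mul d1 d2 p1 p2 : dvdr d1 p1 -> dvdr d2 p2 -> dvdr (d1 * d2) (p1 * p2).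
Proof. by move=> [a ->] [b ->]; exists (a * b); rewrite mulrACA. Qed.

Lemma dvdr0 d : dvdr d 0.
Proof. by exists 0; rewrite mul0r. Qed.

Lemma dvdrD d p q : dvdr d p -> dvdr d q -> dvdr d (p + q).
Proof. by move=> [a ->] [b ->]; exists (a + b); rewrite mulrDl. Qed.

Lemma dvdrB d p q : dvdr d p -> dvdr d q -> dvdr d (p - q).
Proof. by move=> [a ->] [b ->]; exists (a - b); rewrite mulrBl. Qed.

Lemma dvdr_sum (I : Type) (r : seq I) (F : I -> T) d :
  (forall i, dvdr d (F i)) -> dvdr d (\sum_(i <- r) F i).
Proof.
move=> dF; elim: r => [|a r IH]; first by rewrite big_nil; apply: dvdr0.
by rewrite big_cons; apply: dvdrD.
Qed.

Lemma dvdr_prod_mem (I : eqType) (r : seq I) (F : I -> T) i :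
  i \in r -> dvdr (F i) (\prod_(j <- r) F j).
Proof.
elim: r => [|j r IH] //; rewrite inE big_cons => /orP [/eqP ->|ir].
  by rewrite mulrC; apply: dvdr_mulIr.
by apply: dvdr_mull; apply: IH.
Qed.

Lemma dvdr_neq0 d p : dvdr d p -> p != 0 -> d != 0.
Proof. by move=> [a ->]; apply: contra => /eqP ->; rewrite mulr0. Qed.

End Divisibility.

Lemma dvdr_mul2l (T : idomainType) (f a b : T) :
  f != 0 -> dvdr (f * a) (f * b) -> dvdr a b.
Proof. by move=> fn0 [q]; rewrite mulrCA => /(mulfI fn0) ->; apply: dvdr_mulIr. Qed.

Section TotalDegree.
Variable R : realType.
Local Notation MP := {mpoly R[2]}.
Implicit Types p q d f g h : MP.

Lemma msize_tdeg p : p != 0 -> msize p = (tdeg p).+1.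
Proof. by move=> pn0; rewrite /tdeg prednK // lt0n msize_poly_eq0. Qed.

Lemma tdegC (c : R) : tdeg c%:MP = 0%N.
Proof. by rewrite /tdeg msizeC; case: (c != 0). Qed.

Lemma tdeg0 : tdeg (0 : MP) = 0%N.
Proof. by rewrite /tdeg msize0. Qed.

Lemma tdegX (i : 'I_2) : tdeg ('X_i : MP) = 1%N.
Proof. by rewrite /tdeg msizeX mdeg1. Qed.

Lemma tdeg_eq0 p : tdeg p = 0%N -> exists c : R, p = c%:MP.
Proof.
move=> p0; exists p@_0; apply: msize1_polyC.
by move: p0; rewrite /tdeg; case: (msize p) => [|[]].
Qed.

Lemma tdeg_neq0 p : (1 <= tdeg p)%N -> p != 0.
Proof. by apply: contraTneq => ->; rewrite tdeg0. Qed.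

Lemma tdegM p q : p != 0 -> q != 0 -> tdeg (p * q) = (tdeg p + tdeg q)%N.
Proof.
move=> pn0 qn0; have lc_neq0 : mleadc p * mleadc q != 0.
  by rewrite mulf_neq0 // mleadc_eq0.
by rewrite /tdeg msizeM_proper // !msize_tdeg // addSn addnS.
Qed.

Lemma mdvd_tdeg d p : mdvd d p -> p != 0 -> (tdeg d <= tdeg p)%N.
Proof.
move=> [a ->] pn0; rewrite tdegM ?leq_addl //.
  by apply: contra pn0 => /eqP ->; rewrite mul0r.
by apply: contra pn0 => /eqP ->; rewrite mulr0.
Qed.

Lemma mdvdC (c : R) p : c != 0 -> mdvd c%:MP p.
Proof.
by move=> cn0; exists (c^-1 *: p); rewrite mulrC mul_mpolyC scalerA mulfV // scale1r.
Qed.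

Lemma mdvdZ d p (c : R) : mdvd d p -> mdvd d (c *: p).
Proof. by move=> [a ->]; exists (c *: a); rewrite scalerAl. Qed.

Definition irr f : Prop := (1 <= tdeg f)%N /\
  forall g h, f = g * h -> tdeg g = 0%N \/ tdeg h = 0%N.

Lemma irr_neq0 f : irr f -> f != 0.
Proof. by move=> [f1 _]; apply: tdeg_neq0. Qed.

Lemma irr_dvd f g : irr f -> mdvd g f -> (1 <= tdeg g)%N -> mdvd f g.
Proof.
move=> [f1 f_irr] [h fE] g1.
case: (f_irr h g fE) => [/tdeg_eq0 [c hE]|g0]; last by rewrite g0 in g1.
have cn0 : c != 0 by apply: contraTneq f1 => c0; rewrite fE hE c0 mul0r tdeg0.
by exists c^-1%:MP; rewrite fE hE mulrA -rmorphM mulVf // mul1r.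
Qed.

Lemma exists_irr p : (1 <= tdeg p)%N -> exists f, irr f /\ mdvd f p.
Proof.
elim/(@measure_ind _ (@tdeg R)): p => p IH p1.
case: (classic (irr p)) => [irr_p|red_p]; first by exists p; split=> //; apply: dvdr_refl.
have [g [q [pE [g1 q1]]]] :
    exists g q, p = g * q /\ (1 <= tdeg g)%N /\ (1 <= tdeg q)%N.
  apply: NNPP => no_split; apply: red_p; split=> // g q pE.
  apply: NNPP => /not_or_and [/eqP g0 /eqP q0].
  by apply: no_split; exists g, q; rewrite !lt0n.
have lt_gp : (tdeg g < tdeg p)%N by rewrite pE tdegM ?tdeg_neq0 //; lia.
have [f [irr_f f_g]] := IH g lt_gp g1.
by exists f; split=> //; rewrite pE; apply: dvdr_mulr.
Qed.

End TotalDegree.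

Section GaussLemma.
Variable F : fieldType.
Local Notation A := {poly F}.
Local Notation P := {poly {poly F}}.
Implicit Types (pi c : A) (Q G H Fp Aa Bb h : P).

Lemma irredp_prime pi a b :
  irreducible_poly pi -> pi %| a * b -> (pi %| a) \/ (pi %| b).
Proof.
move=> pi_irr pi_ab; case: (boolP (pi %| a)) => pi_a; [by left|right].
by rewrite -(Gauss_dvdpr b (_ : coprimep pi a)) // irreducible_poly_coprime.
Qed.

Lemma dvdrC_coef pi Q i : dvdr pi%:P Q -> pi %| Q`_i.
Proof. by move=> [G ->]; rewrite coefMC dvdp_mulIr. Qed.

Lemma dvdrC_monomial pi c n : pi %| c -> dvdr pi%:P (c *: 'X^n).
Proof.
move=> /dvdpP [c' ->]; exists (c' *: 'X^n).
by rewrite -scalerAl [_ * _%:P]mulrC mul_polyC scalerA.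
Qed.

Lemma lead_monomial_split Q : Q != 0 ->
  exists Q', Q = Q' + lead_coef Q *: 'X^((size Q).-1) /\ (size Q' < size Q)%N.
Proof.
move=> Qn0; exists (Q - lead_coef Q *: 'X^((size Q).-1)); split; first by rewrite subrK.
rewrite (polySpred Qn0) ltnS; apply/leq_sizeP => j le_j.
rewrite coefB coefZ coefXn; case: eqP => [->|/eqP ne].
  by rewrite mulr1 lead_coefE subrr.
rewrite mulr0 subr0; apply/(leq_sizeP _ (size Q)) => //.
by rewrite (polySpred Qn0) ltn_neqAle eq_sym ne le_j.
Qed.

Lemma split_nondvdC pi Q : ~ dvdr pi%:P Q ->
  exists Q1 Q2, Q = Q1 + Q2 /\ dvdr pi%:P Q2 /\ ~~ (pi %| lead_coef Q1).
Proof.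
elim/(@measure_ind _ (fun Q : P => size Q)): Q => Q IH nQ.
have Qn0 : Q != 0 by apply: contra_not_neq nQ => ->; apply: dvdr0.
case: (boolP (pi %| lead_coef Q)) => lc_dvd; last first.
  by exists Q, 0; rewrite addr0; split=> //; split=> //; apply: dvdr0.
have [Q' [QE lt_Q']] := lead_monomial_split Qn0.
have nQ' : ~ dvdr pi%:P Q'.
  by move=> Q'_dvd; apply: nQ; rewrite QE; apply: dvdrD => //; apply: dvdrC_monomial.
have [Q1 [Q2 [Q'E [Q2_dvd lc1]]]] := IH Q' lt_Q' nQ'.
exists Q1, (Q2 + lead_coef Q *: 'X^((size Q).-1)); split; first by rewrite {1}QE Q'E addrA.
by split=> //; apply: dvdrD => //; apply: dvdrC_monomial.
Qed.

Lemma dvdrC_mul_lead pi (F1 : P) H : irreducible_poly pi -> ~~ (pi %| lead_coef F1) ->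
  dvdr pi%:P (F1 * H) -> dvdr pi%:P H.
Proof.
move=> pi_irr lc1; elim/(@measure_ind _ (fun H : P => size H)): H => H IH FH_dvd.
have [->|Hn0] := eqVneq H 0; first exact: dvdr0.
have [H' [HE lt_H']] := lead_monomial_split Hn0.
have lcH : pi %| lead_coef H.
  have := dvdrC_coef (size (F1 * H)).-1 FH_dvd; rewrite -lead_coefE lead_coefM.
  by case/(irredp_prime pi_irr) => // lc1'; rewrite lc1' in lc1.
have top_dvd := dvdrC_monomial ((size H).-1) lcH.
have FH'_dvd : dvdr pi%:P (F1 * H').
  have -> : F1 * H' = F1 * H - F1 * (lead_coef H *: 'X^((size H).-1)).
    by rewrite {1}HE mulrDr addrK.
  by apply: dvdrB => //; apply: dvdr_mull.
by rewrite HE; apply: dvdrD => //; apply: IH.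
Qed.

Lemma dvdrC_mul pi Fp H : irreducible_poly pi ->
  dvdr pi%:P (Fp * H) -> ~ dvdr pi%:P Fp -> dvdr pi%:P H.
Proof.
move=> pi_irr FH_dvd nF.
have [F1 [F2 [FE [F2_dvd lc1]]]] := split_nondvdC nF.
apply: (dvdrC_mul_lead pi_irr lc1).
have -> : F1 * H = Fp * H - F2 * H by rewrite FE mulrDl addrK.
by apply: dvdrB => //; apply: dvdr_mulr.
Qed.

Definition primitive Q : Prop :=
  forall pi, irreducible_poly pi -> ~ dvdr pi%:P Q.

(* A nonconstant polynomial of F[x] has an irreducible divisor (one of
   minimal size among its nonconstant divisors). *)
Lemma exists_irredp_dvd c : (1 < size c)%N ->
  exists pi, irreducible_poly pi /\ pi %| c.
Proof.
move=> c1.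
have [pi [[pi1 pi_c] pi_min]] := ex_minP (fun d : A => size d)
  (ex_intro (fun d : A => (1 < size d)%N /\ d %| c) c (conj c1 (dvdpp c))).
exists pi; split=> //; split=> // q q_size q_pi.
have pin0 : pi != 0 by rewrite -size_poly_gt0 (ltn_trans _ pi1).
have qn0 : q != 0 by apply: contraTneq q_pi => ->; rewrite dvd0p.
have q1 : (1 < size q)%N.
  by move: q_size qn0; rewrite -size_poly_eq0; case: (size q) => [|[]].
have le_piq := pi_min q (conj q1 (dvdp_trans q_pi pi_c)).
rewrite -dvdp_size_eqp //; apply/eqP/anti_leq.
by rewrite le_piq (dvdp_leq pin0 q_pi).
Qed.

Lemma content_decomp G : G != 0 ->
  exists c G', c != 0 /\ primitive G' /\ G = c%:P * G'.
Proof.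
elim/(@measure_ind _ (fun G : P => size (lead_coef G))): G => G IH Gn0.
case: (classic (primitive G)) => G_prim.
  by exists 1, G; rewrite mul1r oner_neq0.
have [pi [pi_irr [G1 GE]]] : exists pi, irreducible_poly pi /\ dvdr pi%:P G.
  by apply: NNPP => nex; apply: G_prim => pi pi_irr piG; apply: nex; exists pi.
have pin0 := irredp_neq0 pi_irr.
have G1n0 : G1 != 0 by apply: contraNneq Gn0 => G10; rewrite GE G10 mul0r.
have lt_G1 : (size (lead_coef G1) < size (lead_coef G))%N.
  rewrite GE lead_coefM lead_coefC size_mul ?lead_coef_eq0 //.
  by have := pi_irr.1; case: (size pi) => [|[|b]] // _; rewrite !addnS ltnS leq_addr.
have [c1 [G' [c1n0 [G'_prim G1E]]]] := IH G1 lt_G1 G1n0.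
exists (pi * c1), G'; rewrite mulf_neq0 //; split=> //; split=> //.
by rewrite GE G1E polyCM; ring.
Qed.

Lemma primitive_dvdr_mulC Fp c H : primitive Fp -> c != 0 ->
  dvdr Fp (c%:P * H) -> dvdr Fp H.
Proof.
move=> F_prim; elim/(@measure_ind _ (fun c : A => size c)): c H => c IH H cn0 [Q QE].
case: (leqP (size c) 1) => c1.
  have cE := size1_polyC c1.
  have c0n0 : c`_0 != 0 by apply: contraNneq cn0 => c00; rewrite cE c00.
  exists ((c`_0)^-1%:P%:P * Q); rewrite -mulrA -QE mulrA -!polyCM.
  by rewrite {2}cE -polyCM mulVf // !polyC1 mul1r.
have [pi [pi_irr /dvdpP [c1' cE]]] := exists_irredp_dvd c1.
have c1'n0 : c1' != 0 by apply: contraNneq cn0 => c0; rewrite cE c0 mul0r.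
have [Q1 Q1E] : dvdr pi%:P Q.
  apply: (dvdrC_mul pi_irr _ (F_prim pi pi_irr)).
  by exists (c1'%:P * H); rewrite [Fp * Q]mulrC -QE cE polyCM; ring.
apply: (IH c1') => //.
  rewrite cE size_mul ?(irredp_neq0 pi_irr) //; have := pi_irr.1.
  by case: (size pi) => [|[|b]] // _; rewrite !addnS ltnS leq_addr.
exists Q1; apply: (@mulfI _ pi%:P); first by rewrite polyC_eq0 irredp_neq0.
have -> : pi%:P * (c1'%:P * H) = c%:P * H by rewrite cE polyCM; ring.
by rewrite QE Q1E; ring.
Qed.

Definition constant2 Q : Prop := exists a : F, Q = a%:P%:P.
Definition irreducible2 Q : Prop :=
  ~ constant2 Q /\ forall G H, Q = G * H -> constant2 G \/ constant2 H.

Lemma constant2_size Q : constant2 Q -> (size Q <= 1)%N.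
Proof. by move=> [a ->]; rewrite size_polyC leq_b1. Qed.

Lemma irreducible2C pi : irreducible2 pi%:P -> irreducible_poly pi.
Proof.
move=> [nc pi_irr]; have pin0 : pi != 0 by apply: contra_not_neq nc => ->; exists 0.
split.
  rewrite ltnNge; apply/negP => pi1; apply: nc; exists pi`_0.
  by rewrite {1}(size1_polyC pi1).
move=> q q_size /dvdpP [r rE].
have : pi%:P = r%:P * q%:P by rewrite rE polyCM.
case/pi_irr => [[a /polyC_inj rE']|[a /polyC_inj qE]].
  have an0 : a != 0 by apply: contraNneq pin0 => a0; rewrite rE rE' a0 mul0r.
  by rewrite rE rE' mul_polyC eqp_sym eqp_scale.
move: q_size; rewrite qE size_polyC; have [a0|//] := eqVneq a 0.
by move: pin0; rewrite rE qE a0 mulr0 eqxx.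
Qed.

Lemma irreducible2_primitive Q : irreducible2 Q -> (1 < size Q)%N -> primitive Q.
Proof.
move=> [_ Q_irr] Q1 pi pi_irr [G QE].
case: (Q_irr G pi%:P); rewrite ?[pi%:P * _]mulrC //.
  move=> /constant2_size G1; move: Q1; rewrite QE mulrC size_Cmul ?irredp_neq0 //.
  by rewrite ltnNge G1.
move=> [a /polyC_inj piE]; have := pi_irr.1; rewrite piE size_polyC.
by case: (a != 0).
Qed.

Lemma ideal_min_pseudo_dvd Fp Aa (g0 : P) h : g0 != 0 ->
  (forall g, g != 0 -> (exists u v, g = u * Fp + v * Aa) -> (size g0 <= size g)%N) ->
  (exists u v, g0 = u * Fp + v * Aa) ->
  (exists u v, h = u * Fp + v * Aa) ->
  dvdr g0 ((lead_coef g0 ^+ Pdiv.Ring.rscalp h g0) *: h).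
Proof.
move=> g0n0 g0_min [u0 [v0 g0E]] [u [v hE]].
exists (Pdiv.Ring.rdivp h g0).
have := Pdiv.ComRing.rdivp_eq g0 h; set r := Pdiv.Ring.rmodp h g0.
set Q := Pdiv.Ring.rdivp h g0; set e := Pdiv.Ring.rscalp h g0.
rewrite -mul_polyC => hdiv.
suff r0 : r = 0 by rewrite hdiv r0 addr0.
apply/eqP; apply: contraT => rn0.
have r_ideal : exists u v, r = u * Fp + v * Aa.
  exists ((lead_coef g0 ^+ e)%:P * u - Q * u0), ((lead_coef g0 ^+ e)%:P * v - Q * v0).
  have -> : r = (lead_coef g0 ^+ e)%:P * h - Q * g0 by rewrite hdiv addrC addKr.
  by rewrite hE g0E !mulrDr !mulrBl !mulrA opprD addrACA.
have := g0_min r rn0 r_ideal.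
by rewrite leqNgt Pdiv.CommonRing.ltn_rmodp g0n0.
Qed.

(* Irreducible elements of F[x][y] are prime, in the case of positive
   y-degree: take g0 of minimal size in the ideal (Fp, Aa); its primitive part
   divides both Fp and Aa, so it is trivial and g0 is a constant. *)
Lemma irreducible2_prime_nonconst Fp Aa Bb : irreducible2 Fp -> (1 < size Fp)%N ->
  dvdr Fp (Aa * Bb) -> ~ dvdr Fp Aa -> dvdr Fp Bb.
Proof.
move=> Fp_irr Fp1 [W ABE] nA.
have F_prim := irreducible2_primitive Fp_irr Fp1.
have An0 : Aa != 0 by apply: contra_not_neq nA => ->; apply: dvdr0.
pose I (g : P) := g != 0 /\ exists u v, g = u * Fp + v * Aa.
have IA : I Aa by split=> //; exists 0, 1; rewrite mul0r add0r mul1r.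
have [g0 [[g0n0 g0I] g0_min]] := ex_minP (fun g : P => size g) (ex_intro I Aa IA).
have g0_min' g : g != 0 -> (exists u v, g = u * Fp + v * Aa) -> (size g0 <= size g)%N.
  by move=> gn0 gI; apply: g0_min.
case: (leqP (size g0) 1) => g01.
  have [u0 [v0 g0E]] := g0I.
  have cn0 : g0`_0 != 0.
    by apply: contraNneq g0n0 => c0; rewrite (size1_polyC g01) c0 polyC0.
  apply: (primitive_dvdr_mulC F_prim cn0); exists (u0 * Bb + v0 * W).
  rewrite -(size1_polyC g01) g0E mulrDl -(mulrA v0) ABE mulrDl !mulrA.
  by rewrite [u0 * Fp * Bb]mulrAC.
have lcn0 : lead_coef g0 != 0 by rewrite lead_coef_eq0.
have [c [gt [cn0 [gt_prim g0E]]]] := content_decomp g0n0.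
have gt_dvd h : (exists u v, h = u * Fp + v * Aa) -> dvdr gt h.
  move=> hI; have [Q QE] := ideal_min_pseudo_dvd g0n0 g0_min' g0I hI.
  apply: (primitive_dvdr_mulC gt_prim (expf_neq0 (Pdiv.Ring.rscalp h g0) lcn0)).
  by exists (Q * c%:P); rewrite mul_polyC QE g0E mulrA.
have [W1 W1E] : dvdr gt Fp by apply: gt_dvd; exists 1, 0; rewrite mul1r mul0r addr0.
have [W2 W2E] : dvdr gt Aa by apply: gt_dvd; exists 0, 1; rewrite mul0r add0r mul1r.
case: (Fp_irr.2 _ _ W1E) => [[a aE]|/constant2_size gt1]; last first.
  by move: g01; rewrite g0E size_Cmul // ltnNge gt1.
have an0 : a != 0.
  by apply: contraTneq Fp1 => a0; rewrite W1E aE a0 !polyC0 mul0r size_poly0.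
exfalso; apply: nA; exists (W2 * (a^-1)%:P%:P).
by rewrite W2E W1E aE !mulrA -(mulrA W2) -!polyCM mulVf // !polyC1 mulr1.
Qed.

Lemma irreducible2_prime Fp Aa Bb :
  irreducible2 Fp -> dvdr Fp (Aa * Bb) -> dvdr Fp Aa \/ dvdr Fp Bb.
Proof.
move=> Fp_irr AB_dvd; case: (classic (dvdr Fp Aa)) => [|nA]; [by left|right].
case: (leqP (size Fp) 1) => Fp1; last exact: irreducible2_prime_nonconst AB_dvd nA.
move: Fp_irr AB_dvd nA; rewrite (size1_polyC Fp1) => Fp_irr [W ABE] nA.
have pi_irr := irreducible2C Fp_irr.
by apply: (@dvdrC_mul _ Aa _ pi_irr) => //; exists W.
Qed.

End GaussLemma.

Section BivariateUFD.
Variable R : realType.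
Local Notation MP := {mpoly R[2]}.
Local Notation P2 := {poly {poly R}}.
Implicit Types p q d f g h a b : MP.

(* The ring isomorphism R[x,y] ~ R[x][y], sending x to 'X%:P and y to 'X. *)
Definition XY_image : 'I_2 -> P2 := fun i => if i == ord0 then 'X%:P else 'X.
Definition to_poly2 : MP -> P2 := mmap (polyC \o polyC) XY_image.
HB.instance Definition _ :=
  GRing.RMorphism.copy to_poly2 (mmap (polyC \o polyC) XY_image).

(* Its inverse evaluates the inner variable at 'X_0, then the outer at 'X_1. *)
Lemma X0_comm : commr_rmorph (mpolyC 2 (R := R)) 'X_0.
Proof. by move=> x; apply: mulrC. Qed.
Local Notation eval_x := (horner_morph X0_comm).
Lemma X1_comm : commr_rmorph eval_x 'X_1.
Proof. by move=> x; apply: mulrC. Qed.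
Definition of_poly2 : P2 -> MP := horner_morph X1_comm.
HB.instance Definition _ := GRing.RMorphism.copy of_poly2 (horner_morph X1_comm).

Lemma to_poly2C (c : R) : to_poly2 c%:MP = c%:P%:P.
Proof. by rewrite /to_poly2 mmapC. Qed.

Lemma of_poly2C (c : R) : of_poly2 c%:P%:P = c%:MP.
Proof. by rewrite /of_poly2 horner_morphC /= horner_morphC. Qed.

Lemma of_poly2_XC : of_poly2 'X%:P = 'X_0.
Proof. by rewrite /of_poly2 horner_morphC /= horner_morphX. Qed.

Lemma of_poly2X : of_poly2 'X = 'X_1.
Proof. by rewrite /of_poly2 horner_morphX. Qed.

Lemma of_to_poly2 p : of_poly2 (to_poly2 p) = p.
Proof.
have -> : of_poly2 (to_poly2 p) = \sum_(m <- msupp p) of_poly2 (to_poly2 (p@_m *: 'X_[m])).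
  by rewrite {1}(mpolyE p) (raddf_sum to_poly2) (raddf_sum of_poly2).
rewrite [RHS](mpolyE p); apply: eq_bigr => m _.
rewrite -mul_mpolyC !rmorphM /= to_poly2C of_poly2C; congr (_ * _).
rewrite mpolyXE_id !rmorph_prod; apply: eq_bigr => i _.
rewrite !rmorphXn /= /to_poly2 mmapX mmap1U; congr (_ ^+ _).
case: i => [[|[|i]] lt_i2] //=.
  by rewrite /XY_image /= of_poly2_XC; congr 'X_ _; apply: val_inj.
by rewrite /XY_image /= of_poly2X; congr 'X_ _; apply: val_inj.
Qed.

Lemma to_of_poly2 (Q : P2) : to_poly2 (of_poly2 Q) = Q.
Proof.
have to_of_C (c : {poly R}) : to_poly2 (of_poly2 c%:P) = c%:P.
  elim/poly_ind: c => [|c a IH]; first by rewrite !rmorph0.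
  rewrite polyCD polyCM !rmorphD !rmorphM /= IH of_poly2_XC of_poly2C to_poly2C.
  by rewrite /to_poly2 mmapX mmap1U.
elim/poly_ind: Q => [|Q c IH]; first by rewrite !rmorph0.
by rewrite !rmorphD !rmorphM /= IH of_poly2X to_of_C /to_poly2 mmapX mmap1U.
Qed.

Lemma to_poly2_inj : injective to_poly2.
Proof. by move=> p q E; rewrite -(of_to_poly2 p) E of_to_poly2. Qed.

(* Irreducible polynomials of R[x,y] are prime, transported from F[x][y]. *)
Lemma irr_prime f a b : irr f -> mdvd f (a * b) -> mdvd f a \/ mdvd f b.
Proof.
move=> [f1 f_irr] [Q QE].
have irr2 : irreducible2 (to_poly2 f).
  split.
    by move=> [c cE]; move: f1; rewrite -(of_to_poly2 f) cE of_poly2C tdegC.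
  move=> G H fE.
  have : f = of_poly2 G * of_poly2 H by rewrite -(of_to_poly2 f) fE rmorphM.
  by case/f_irr => /tdeg_eq0 [c cE]; [left|right]; exists c;
    rewrite -[LHS]to_of_poly2 cE to_poly2C.
have ab_dvd : dvdr (to_poly2 f) (to_poly2 a * to_poly2 b).
  by exists (to_poly2 Q); rewrite -!rmorphM QE.
by case: (irreducible2_prime irr2 ab_dvd) => [[W WE]|[W WE]]; [left|right];
  exists (of_poly2 W); apply: to_poly2_inj; rewrite rmorphM /= to_of_poly2.
Qed.

Lemma irr_factorization p : p != 0 -> exists (c : R) (l : seq MP),
  c != 0 /\ (forall x, x \in l -> irr x) /\ p = c%:MP * \prod_(x <- l) x.
Proof.
elim/(@measure_ind _ (@tdeg R)): p => p IH pn0.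
case: (posnP (tdeg p)) => [/tdeg_eq0 [c pE]|p1].
  exists c, [::]; rewrite big_nil mulr1; split=> //.
  by apply: contraNneq pn0 => c0; rewrite pE c0.
have [f [f_irr [q pE]]] := exists_irr p1.
have qn0 : q != 0 by apply: contraNneq pn0 => q0; rewrite pE q0 mul0r.
have lt_qp : (tdeg q < tdeg p)%N.
  by rewrite pE tdegM ?(irr_neq0 f_irr) //; have := f_irr.1; lia.
have [c [l [cn0 [l_irr qE]]]] := IH q lt_qp qn0.
exists c, (f :: l); split=> //; split.
  by move=> x; rewrite inE => /orP [/eqP ->|/l_irr].
by rewrite pE qE big_cons; ring.
Qed.

Lemma irr_dvd_prod f (c : R) (l : seq MP) : irr f -> c != 0 ->
  (forall x, x \in l -> irr x) -> mdvd f (c%:MP * \prod_(x <- l) x) ->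
  exists2 x, x \in l & mdvd x f.
Proof.
move=> f_irr cn0; elim: l => [|x l IH] l_irr.
  rewrite big_nil mulr1 => /mdvd_tdeg; rewrite tdegC mpolyC_eq0 => /(_ cn0).
  by have := f_irr.1; lia.
have x_irr : irr x by apply: l_irr; rewrite mem_head.
rewrite big_cons mulrCA => /(irr_prime f_irr) [f_x|f_rest].
  by exists x; rewrite ?mem_head //; apply: irr_dvd f_x f_irr.1.
have l_irr' z : z \in l -> irr z by move=> zl; apply: l_irr; rewrite inE zl orbT.
have [y y_l y_f] := IH l_irr' f_rest.
by exists y; rewrite // inE y_l orbT.
Qed.

Lemma dvd_common_cofactor d g W H : g * H != 0 ->
  mdvd d (g * W) -> mdvd d (g * H) ->
  (forall f, irr f -> mdvd f W -> mdvd f H -> False) -> mdvd d g.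
Proof.
move=> + + + coprimeWH.
elim/(@measure_ind _ (@tdeg R)): d g => d IH g gHn0 d_gW d_gH.
have dn0 := dvdr_neq0 d_gH gHn0.
case: (posnP (tdeg d)) => [/tdeg_eq0 [c dE]|d1].
  by rewrite dE; apply: mdvdC; apply: contraNneq dn0 => c0; rewrite dE c0.
have [f [f_irr [d1' dE]]] := exists_irr d1.
have fn0 := irr_neq0 f_irr.
have d1'n0 : d1' != 0 by apply: contraNneq dn0 => e; rewrite dE e mul0r.
case: (classic (mdvd f g)) => [[g1 gE]|nfg].
  have g1Hn0 : g1 * H != 0 by apply: contraNneq gHn0; rewrite gE mulrAC => ->; rewrite mul0r.
  have lt_d1' : (tdeg d1' < tdeg d)%N by rewrite dE tdegM //; have := f_irr.1; lia.
  have cancel_f x : mdvd d (g * x) -> mdvd d1' (g1 * x).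
    rewrite dE gE => dvd_dgx; apply: (dvdr_mul2l fn0).
    have -> : f * (g1 * x) = g1 * f * x by ring.
    by rewrite mulrC.
  rewrite dE gE; apply: dvdr_mul; last exact: dvdr_refl.
  exact: IH lt_d1' g1 g1Hn0 (cancel_f _ d_gW) (cancel_f _ d_gH).
have f_d x : mdvd d x -> mdvd f x.
  by move=> /(dvdr_trans _); apply; rewrite dE; apply: dvdr_mulIr.
case: (irr_prime f_irr (f_d _ d_gW)) => // f_W.
case: (irr_prime f_irr (f_d _ d_gH)) => // f_H.
by case: (coprimeWH f f_irr f_W f_H).
Qed.

End BivariateUFD.

Section Derivatives.
Variable R : realType.
Local Notation MP := {mpoly R[2]}.
Implicit Types p q f : MP.

Lemma msize_le p n : (forall m, m \in msupp p -> (mdeg m < n)%N) -> (msize p <= n)%N.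
Proof.
move=> le_n; rewrite msizeE big_seq; apply: (big_ind (fun x => x <= n)%N) => //.
by move=> x y; rewrite geq_max => -> ->.
Qed.

Lemma mderiv_tdeg p (i : 'I_2) :
  mderiv i p != 0 -> (tdeg (mderiv i p) < tdeg p)%N.
Proof.
move=> dn0; have pn0 : p != 0 by apply: contraNneq dn0 => ->; rewrite mderiv0.
have : (msize (mderiv i p) <= (msize p).-1)%N.
  apply: msize_le => m; rewrite mcoeff_msupp mcoeff_mderiv => m_supp.
  have mU_supp : (m + U_(i))%MM \in msupp p.
    by rewrite mcoeff_msupp; apply: contraNneq m_supp => ->; rewrite mul0rn.
  by have := msize_mdeg_lt mU_supp; rewrite mdegD mdeg1 addn1; case: (msize p).
by rewrite !msize_tdeg //=; lia.
Qed.

Lemma mderiv_eq0_const p : (forall i : 'I_2, mderiv i p = 0) -> tdeg p = 0%N.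
Proof.
move=> d0; suff : (msize p <= 1)%N by rewrite /tdeg; case: (msize p) => [|[]].
apply: msize_le => m m_supp; rewrite ltnS leqn0 mdeg_eq0; apply/eqP/mnmP => i.
rewrite mnm0E; apply/eqP; rewrite -leqn0 leqNgt; apply/negP => mi_pos.
have le_Um : (U_(i) <= m)%MM.
  by apply/mnm_lepP => j; rewrite mnm1E; case: eqP => [<-|].
have := congr1 (mcoeff (m - U_(i))%MM) (d0 i).
rewrite mcoeff_mderiv submK // mcoeff0 => /eqP; rewrite mulrn_eq0 /=.
by move: m_supp; rewrite mcoeff_msupp => /negbTE ->.
Qed.

Lemma sq_dvd_mderiv f s (i : 'I_2) : mdvd (f ^+ 2) s -> mdvd f (mderiv i s).
Proof.
move=> [h ->]; rewrite mderivM expr2 mderivM.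
apply: dvdrD; first by apply: dvdr_mull; apply: dvdr_mull; apply: dvdr_refl.
apply: dvdr_mull; apply: dvdrD; [apply: dvdr_mull| apply: dvdr_mulr];
  exact: dvdr_refl.
Qed.

Lemma has_multiple_factor0 : has_multiple_factor (0 : MP).
Proof. by exists 'X_0; rewrite tdegX; split=> //; apply: dvdr0. Qed.

Lemma sqfree_neq0 p : ~ has_multiple_factor p -> p != 0.
Proof. by apply: contra_not_neq => ->; apply: has_multiple_factor0. Qed.

Lemma sqfree_dvd p d : ~ has_multiple_factor p -> mdvd d p -> ~ has_multiple_factor d.
Proof. by move=> p_sqf d_p [r [r1 r_d]]; apply: p_sqf; exists r; split=> //; apply: dvdr_trans d_p. Qed.

Lemma sqfreeP p : (forall f, irr f -> ~ mdvd (f ^+ 2) p) -> ~ has_multiple_factor p.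
Proof.
move=> no_sq [r [r1 r2_p]]; have [f [f_irr f_r]] := exists_irr r1.
by apply: (no_sq f f_irr); apply: dvdr_trans r2_p; apply: dvdr_mul.
Qed.

Lemma irr_dvd_mderivM f p1 (i : 'I_2) : irr f -> ~ mdvd f p1 ->
  mdvd f (mderiv i (p1 * f)) -> mderiv i f = 0.
Proof.
move=> f_irr nf_p1; rewrite mderivM => f_d.
have f_p1df : mdvd f (p1 * mderiv i f).
  have -> : p1 * mderiv i f = (mderiv i p1 * f + p1 * mderiv i f) - mderiv i p1 * f.
    by ring.
  by apply: dvdrB => //; apply: dvdr_mull; apply: dvdr_refl.
case: (irr_prime f_irr f_p1df) => [//|f_df].
apply/eqP; apply: contraT => dn0.
by have := mdvd_tdeg f_df dn0; have := mderiv_tdeg dn0; lia.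
Qed.

Lemma wronskian_eq0_proportional p q : ~ has_multiple_factor p ->
  (forall i : 'I_2, p * mderiv i q = mderiv i p * q) -> exists c : R, q = c *: p.
Proof.
elim/(@measure_ind _ (@tdeg R)): p q => p IH q p_sqf W0.
have pn0 := sqfree_neq0 p_sqf.
case: (posnP (tdeg p)) => [/tdeg_eq0 [c pE]|p1].
  have cn0 : c != 0 by apply: contraNneq pn0 => c0; rewrite pE c0.
  have /tdeg_eq0 [d ->] : tdeg q = 0%N.
    apply: mderiv_eq0_const => i; have := W0 i; rewrite pE mderivC mul0r.
    by move/eqP; rewrite mulf_eq0 mpolyC_eq0 (negbTE cn0) => /eqP.
  by exists (d / c); rewrite pE -mul_mpolyC -rmorphM mulfVK.
have [f [f_irr [p1' pE]]] := exists_irr p1.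
have fn0 := irr_neq0 f_irr.
have nf_p1' : ~ mdvd f p1'.
  move=> [u uE]; apply: p_sqf; exists f; split; first exact: f_irr.1.
  by exists u; rewrite pE uE expr2 mulrA.
case: (classic (mdvd f q)) => [[q1 qE]|nf_q].
  have p1'_sqf : ~ has_multiple_factor p1'.
    by apply: sqfree_dvd p_sqf _; rewrite pE; apply: dvdr_mulr; apply: dvdr_refl.
  have p1'n0 : p1' != 0 by apply: contraNneq pn0 => p0; rewrite pE p0 mul0r.
  have lt_p1' : (tdeg p1' < tdeg p)%N by rewrite pE tdegM //; have := f_irr.1; lia.
  have [c cE] : exists c : R, q1 = c *: p1'.
    apply: (IH _ lt_p1' q1 p1'_sqf) => i; apply: (@mulfI _ (f ^+ 2)).
      by rewrite expf_neq0.
    have := W0 i; rewrite pE qE !mderivM => /eqP; rewrite -subr_eq0 => /eqP W0i.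
    by apply/eqP; rewrite -subr_eq0 -W0i; apply/eqP; ring.
  by exists c; rewrite qE pE cE scalerAl.
exfalso; have := f_irr.1; rewrite (mderiv_eq0_const (p := f)) // => i.
apply: (irr_dvd_mderivM f_irr nf_p1'); rewrite -pE.
have f_dpq : mdvd f (mderiv i p * q).
  by rewrite -W0 pE; apply: dvdr_mulr; apply: dvdr_mulIr.
by case: (irr_prime f_irr f_dpq) => // /nf_q.
Qed.

Lemma sq_dvd_wronskian f p q (t : R) (i : 'I_2) : mdvd (f ^+ 2) (p + t *: q) ->
  mdvd f (p * mderiv i q - mderiv i p * q).
Proof.
move=> sq_dvd; set s := p + t *: q.
have -> : p * mderiv i q - mderiv i p * q = s * mderiv i q - mderiv i s * q.
  by rewrite /s mderivD mderivZ -!mul_mpolyC; ring.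
apply: dvdrB; apply: dvdr_mulr; last exact: sq_dvd_mderiv sq_dvd.
by apply: dvdr_trans sq_dvd; rewrite expr2; apply: dvdr_mulIr.
Qed.

End Derivatives.

Section SmallDegree.
Variable R : realType.
Local Notation MP := {mpoly R[2]}.

(* The six monomials 1, x, y, x^2, xy, y^2 of degree at most 2. *)
Definition deg2_monomial (j : 'I_6) : 'X_{1..2} :=
  [multinom (if i == ord0 then nth 0%N [:: 0; 1; 0; 2; 1; 0]%N j
             else nth 0%N [:: 0; 0; 1; 0; 1; 2]%N j) | i < 2].

Lemma mdeg2 (m : 'X_{1..2}) : mdeg m = (m ord0 + m (lift ord0 ord0))%N.
Proof. by rewrite mdegE big_ord_recl big_ord1. Qed.

Lemma deg2_monomial_surj (m : 'X_{1..2}) : (mdeg m < 3)%N ->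
  exists j, m = deg2_monomial j.
Proof.
rewrite mdeg2 => lt_m3.
have mk (j : 'I_6) : nth 0%N [:: 0; 1; 0; 2; 1; 0]%N j = m ord0 ->
    nth 0%N [:: 0; 0; 1; 0; 1; 2]%N j = m (lift ord0 ord0) -> m = deg2_monomial j.
  move=> m0 m1; apply/mnmP => i; rewrite mnmE.
  case: i => [[|[|i]] lt_i2] //=.
    by rewrite m0; congr (m _); apply: val_inj.
  by rewrite m1; congr (m _); apply: val_inj.
move: lt_m3; case: (m ord0) mk => [|[|[|a]]]; case: (m (lift ord0 ord0)) => [|[|[|b]]] //= mk _.
- by exists (@Ordinal 6 0 isT); apply: mk.
- by exists (@Ordinal 6 2 isT); apply: mk.
- by exists (@Ordinal 6 5 isT); apply: mk.
- by exists (@Ordinal 6 1 isT); apply: mk.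
- by exists (@Ordinal 6 4 isT); apply: mk.
- by exists (@Ordinal 6 3 isT); apply: mk.
Qed.

(* Seven polynomials of degree at most 2 are linearly dependent: their
   coefficient vectors on the six monomials are rows of a 7 x 6 matrix. *)
Lemma deg2_dependent (b : 'I_7 -> MP) : (forall i, (tdeg (b i) <= 2)%N) ->
  exists lam : 'I_7 -> R, (exists i, lam i != 0) /\ \sum_i lam i *: b i = 0.
Proof.
move=> b_deg; pose M : 'M[R]_(7, 6) := \matrix_(i, j) (b i)@_(deg2_monomial j).
have /rowV0Pn [v /sub_kermxP vM vn0] : kermx M != 0.
  by rewrite -mxrank_eq0 mxrank_ker; have := rank_leq_col M; lia.
exists (fun i => v 0 i); split.
  apply: NNPP => v0; apply/negP: vn0; apply/negPn/eqP/matrixP => i j.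
  rewrite mxE (ord1 i); apply/eqP; apply: contraT => vj; exfalso; apply: v0.
  by exists j.
apply/mpolyP => m; rewrite mcoeff0 raddf_sum /=.
have [le3m|lt_m3] := leqP 3 (mdeg m).
  apply: big1 => i _; rewrite mcoeffZ.
  suff /memN_msupp_eq0 -> : m \notin msupp (b i) by rewrite mulr0.
  apply: msize_mdeg_ge; apply: leq_trans le3m.
  by have := b_deg i; rewrite /tdeg; case: (msize (b i)).
have [j ->] := deg2_monomial_surj lt_m3.
have := congr1 (fun A : 'M[R]_(1, 6) => A 0 j) vM; rewrite !mxE => vMj.
by rewrite -[RHS]vMj; apply: eq_bigr => i _; rewrite mcoeffZ mxE.
Qed.

Lemma lin_indep_neq0 n (s : 'I_n -> MP) : lin_indep s -> forall j, s j != 0.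
Proof.
move=> s_indep j; apply/eqP => sj0.
suff : (1 : R) = 0 by move/eqP; rewrite oner_eq0.
have := s_indep (fun i => (i == j)%:R) _ j; rewrite eqxx; apply.
rewrite (bigD1 j) //= sj0 scaler0 add0r big1 // => i /negbTE ->.
by rewrite scale0r.
Qed.

(* If s_0 divides e s_i for i = 1..6 with e nonzero of degree <= 2, the
   quotients and e are seven polynomials of degree <= 2, whose dependence
   (multiplied by s_0 / e) would contradict the independence of the s_i. *)
Lemma no_small_multiplier (k : nat) (s : 'I_7 -> MP) (e : MP) : lin_indep s ->
  (forall i, tdeg (s i) = k) -> e != 0 -> (tdeg e <= 2)%N ->
  ~ (forall i : 'I_6, mdvd (s ord0) (e * s (lift ord0 i))).
Proof.
move=> s_indep s_deg en0 e2 dvd_es.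
have sn0 := lin_indep_neq0 s_indep.
have [a aE] := fin_all_exists dvd_es.
pose b (j : 'I_7) := if unlift ord0 j is Some i then a i else e.
have b_deg j : (tdeg (b j) <= 2)%N.
  rewrite /b; case: (unliftP ord0 j) => [i _|_] //.
  have [->|an0] := eqVneq (a i) 0; first by rewrite tdeg0.
  have := congr1 (@tdeg R) (aE i); rewrite !tdegM // !s_deg => eq_deg.
  by move: e2; rewrite -(leq_add2r k) eq_deg leq_add2r.
have [lam [[i0 lam_i0] sum_b]] := deg2_dependent b_deg.
have sum_s : e * \sum_j lam j *: s j = 0.
  transitivity (s ord0 * \sum_j lam j *: b j); last by rewrite sum_b mulr0.
  rewrite !mulr_sumr; apply: eq_bigr => j _; rewrite -!scalerAr.
  by case: (unliftP ord0 j) => [i ->|->]; rewrite /b ?liftK ?unlift_none ?aE mulrC.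
move: sum_s => /eqP; rewrite mulf_eq0 (negbTE en0) /= => /eqP sum_s.
by move: lam_i0; rewrite (s_indep lam sum_s i0) eqxx.
Qed.

End SmallDegree.

Section Pencils.
Variables (R : numFieldType) (V : lmodType R).

Definition lin_closed (U : V -> Prop) : Prop :=
  forall (a b : R) u v, U u -> U v -> U (a *: u + b *: v).

Lemma pencil_twice U u w (m m' : nat) : lin_closed U -> m <> m' ->
  U (u + m%:R *: w) -> U (u + m'%:R *: w) -> U u /\ U w.
Proof.
move=> U_cl ne Um Um'.
have dn0 : (m%:R - m'%:R : R) != 0 by rewrite subr_eq0 eqr_nat; apply/eqP.
have Uw : U w.
  have <- : (m%:R - m'%:R)^-1 *: (u + m%:R *: w)
      + (- (m%:R - m'%:R)^-1) *: (u + m'%:R *: w) = w.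
    by rewrite scaleNr -scalerBr opprD addrACA subrr add0r -scalerBl scalerA
      mulVf // scale1r.
  exact: U_cl.
split=> //; have <- : 1 *: (u + m%:R *: w) + (- m%:R) *: w = u.
  by rewrite scale1r scaleNr addrK.
exact: U_cl.
Qed.

Lemma pencil_avoid (n : nat) (U : nat -> V -> Prop) u w :
  (forall j, (j < n)%N -> lin_closed (U j)) ->
  (forall j, (j < n)%N -> ~ (U j u /\ U j w)) ->
  exists m : nat, forall j, (j < n)%N -> ~ U j (u + m%:R *: w).
Proof.
move=> U_cl not_both.
have once j m m' : (j < n)%N -> (m < n.+1)%N -> (m' < n.+1)%N ->
    U j (u + m%:R *: w) -> U j (u + m'%:R *: w) -> m = m'.
  move=> lt_jn _ _ Um Um'; apply: NNPP => ne.
  exact: not_both j lt_jn (pencil_twice (U_cl j lt_jn) ne Um Um').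
have [m [_ m_ok]] := pigeonhole_avoid (ltnSn n) once.
by exists m.
Qed.

(* A vector space is not a finite union of proper subspaces: inside a
   subspace S, finitely many stable properties that each fail somewhere in S
   fail simultaneously at some point of S. *)
Lemma avoid_finite (n : nat) (U : nat -> V -> Prop) (S : V -> Prop) :
  lin_closed S -> S 0 -> (forall j, (j < n)%N -> lin_closed (U j)) ->
  (forall j, (j < n)%N -> exists2 v, S v & ~ U j v) ->
  exists2 v, S v & forall j, (j < n)%N -> ~ U j v.
Proof.
move=> S_cl S0; elim: n => [|n IH] U_cl U_proper; first by exists 0.
have [u Su u_ok] : exists2 u, S u & forall j, (j < n)%N -> ~ U j u.
  by apply: IH => j lt_jn; [apply: U_cl|apply: U_proper]; apply: ltnW.
have [w Sw w_ok] := U_proper n (ltnSn n).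
have not_both j : (j < n.+1)%N -> ~ (U j u /\ U j w).
  rewrite ltnS leq_eqVlt => /orP [/eqP ->|lt_jn] [Uu Uw]; first exact: w_ok.
  exact: u_ok lt_jn Uu.
have [m m_ok] := pencil_avoid U_cl not_both.
exists (u + m%:R *: w) => //.
by rewrite -[u]scale1r; apply: S_cl.
Qed.

End Pencils.

Section Cofactors.
Variable R : realType.
Local Notation MP := {mpoly R[2]}.
Implicit Types p q d g : MP.

Lemma mdvd_lin_closed d : lin_closed (mdvd d).
Proof. by move=> a b u v d_u d_v; apply: dvdrD; apply: mdvdZ. Qed.

Lemma exists_max_divisor (P : MP -> Prop) p : p != 0 -> P 1 ->
  (forall d, P d -> mdvd d p) ->
  exists g, P g /\ forall d, P d -> (tdeg d <= tdeg g)%N.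
Proof.
move=> pn0 P1 P_dvd; apply: (@ex_maxP _ (@tdeg R) _ (tdeg p)); first by exists 1.
by move=> d /P_dvd /mdvd_tdeg; apply.
Qed.

Lemma coprime_cofactors g W H : g * W != 0 -> g * H != 0 ->
  (forall f, irr f -> mdvd f W -> mdvd f H -> False) ->
  exists gamma gamma0 r, g * W = gamma * r /\ g * H = gamma0 * r /\
    rel_prime gamma gamma0 /\ mdvd H gamma0.
Proof.
move=> gWn0 gHn0 coprimeWH.
have [r [[r_gW r_gH] r_max]] := exists_max_divisor
  (P := fun r => mdvd r (g * W) /\ mdvd r (g * H)) gHn0
  (conj (dvd1r _) (dvd1r _)) (fun r => @proj2 _ _).
have [g2 gE] := dvd_common_cofactor gHn0 r_gW r_gH coprimeWH.
have [gamma gammaE] := r_gW.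
exists gamma, (H * g2), r; split=> //; split; first by rewrite gE; ring.
split; last by exists g2; rewrite mulrC.
move=> d [u uE] [v vE].
have gH_dr : g * H = v * d * r by rewrite gE -vE; ring.
have dn0 : d != 0 by apply: contraNneq gHn0 => d0; rewrite gH_dr d0 mulr0 mul0r.
have rn0 : r != 0 by apply: contraNneq gHn0 => r0; rewrite gH_dr r0 mulr0.
have dr_common : mdvd (d * r) (g * W) /\ mdvd (d * r) (g * H).
  by split; [exists u; rewrite gammaE uE mulrA|exists v; rewrite gH_dr mulrA].
by have := r_max _ dr_common; rewrite tdegM //; lia.
Qed.

End Cofactors.

Section SquarefreePencil.
Variable R : realType.
Local Notation MP := {mpoly R[2]}.

(* Indeed an irreducible
   square factor of a member divides the Wronskian, and each divisor in play
   divides at most one member. *)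
Lemma pencil_sqfree (p q : MP) (i : 'I_2) (Ds : seq MP) :
  ~ has_multiple_factor p -> p * mderiv i q != mderiv i p * q ->
  (forall D, D \in Ds -> ~ mdvd D q) ->
  exists m : nat, ~ has_multiple_factor (p + m%:R *: q) /\
    forall D, D \in Ds -> ~ mdvd D (p + m%:R *: q).
Proof.
move=> p_sqf Kn0 Ds_q; rewrite -subr_eq0 in Kn0.
have [cK [kl [cKn0 [kl_irr KE]]]] := irr_factorization Kn0.
pose All := Ds ++ [seq f ^+ 2 | f <- kl].
have not_both j : (j < size All)%N ->
    ~ (mdvd (nth 0 All j) p /\ mdvd (nth 0 All j) q).
  move=> /(mem_nth 0); rewrite mem_cat => /orP [/Ds_q D_q [_ /D_q]//|].
  move=> /mapP [f f_kl ->] [f2_p _]; apply: p_sqf; exists f; split=> //.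
  exact: (kl_irr f f_kl).1.
have [m m_ok] := pencil_avoid (U := fun j => mdvd (nth 0 All j))
  (fun j _ => @mdvd_lin_closed _ (nth 0 All j)) not_both.
have All_ok D : D \in All -> ~ mdvd D (p + m%:R *: q).
  by move=> D_All; rewrite -(nth_index 0 D_All); apply: m_ok; rewrite index_mem.
exists m; split; last by move=> D D_Ds; apply: All_ok; rewrite mem_cat D_Ds.
apply: sqfreeP => f f_irr f2_dvd.
have := sq_dvd_wronskian i f2_dvd; rewrite KE => /(irr_dvd_prod f_irr cKn0 kl_irr).
move=> [x x_kl x_f]; apply: (All_ok (x ^+ 2)).
  by rewrite mem_cat; apply/orP; right; apply: map_f.
by apply: dvdr_trans f2_dvd; rewrite !expr2; apply: dvdr_mul.
Qed.

End SquarefreePencil.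

Section Construction.
Variables (R : realType) (k : nat) (s : 'I_7 -> {mpoly R[2]}).
Local Notation MP := {mpoly R[2]}.
Hypotheses (s_indep : lin_indep s) (s_deg : forall i, tdeg (s i) = k)
  (s_sqfree : forall i, ~ has_multiple_factor (s i)).

Definition in_span (p : MP) : Prop :=
  exists c : 'I_6 -> R, p = \sum_(i < 6) c i *: s (lift ord0 i).

Lemma in_span_lin_closed : lin_closed in_span.
Proof.
move=> a b _ _ [c ->] [c' ->]; exists (fun i => a * c i + b * c' i).
rewrite !scaler_sumr -big_split; apply: eq_bigr => i _.
by rewrite scalerDl !scalerA.
Qed.

Lemma in_span0 : in_span 0.
Proof. by exists (fun=> 0); rewrite big1 // => i _; rewrite scale0r. Qed.

Lemma in_span_gen (i : 'I_6) : in_span (s (lift ord0 i)).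
Proof.
exists (fun j => (j == i)%:R); rewrite (bigD1 i) //= eqxx scale1r big1 ?addr0 //.
by move=> j /negbTE ->; rewrite scale0r.
Qed.

Definition good_combination (sigma : MP) : Prop :=
  in_span sigma /\ ~ has_multiple_factor sigma /\
  exists gamma gamma0 r : MP,
    sigma = gamma * r /\ s ord0 = gamma0 * r /\
    rel_prime gamma gamma0 /\ (3 <= tdeg gamma0)%N.

Definition common_divisor (d : MP) : Prop :=
  mdvd d (s ord0) /\ forall i : 'I_6, mdvd d (s (lift ord0 i)).

Lemma exists_gcd : exists g, common_divisor g /\
  forall d, common_divisor d -> (tdeg d <= tdeg g)%N.
Proof.
apply: (exists_max_divisor (lin_indep_neq0 s_indep ord0)) => [|d []//].
by split=> [|i]; apply: dvd1r.
Qed.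

Section GreatestCommonDivisor.
Variables (g H : MP).
Hypotheses (s0E : s ord0 = g * H) (g_dvd : forall i, mdvd g (s (lift ord0 i)))
  (g_max : forall d, common_divisor d -> (tdeg d <= tdeg g)%N).

Lemma gH_neq0 : g * H != 0.
Proof. by rewrite -s0E lin_indep_neq0. Qed.

Lemma H_neq0 : H != 0.
Proof. by apply: contraNneq gH_neq0 => ->; rewrite mulr0. Qed.

Lemma cofactor_deg3 : (3 <= tdeg H)%N.
Proof.
rewrite leqNgt; apply/negP => lt_H3.
apply: (no_small_multiplier s_indep s_deg H_neq0); first by rewrite -ltnS.
by move=> i; have [w wE] := g_dvd i; exists w; rewrite wE s0E; ring.
Qed.

Lemma dvd_span sigma : in_span sigma -> mdvd g sigma.
Proof. by move=> [c ->]; apply: dvdr_sum => i; apply: mdvdZ. Qed.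

(* By maximality of g, g x does not divide the whole span, for any
   nonconstant divisor x of H. *)
Lemma factor_escapes x : (1 <= tdeg x)%N -> mdvd x H ->
  exists2 sigma, in_span sigma & ~ mdvd (g * x) sigma.
Proof.
move=> x1 x_H; apply: NNPP => all_dvd.
have gx_common : common_divisor (g * x).
  split=> [|i]; first by rewrite s0E; apply: dvdr_mul => //; apply: dvdr_refl.
  by apply: NNPP => ndvd; apply: all_dvd; exists (s (lift ord0 i)) => //; apply: in_span_gen.
have gn0 : g != 0 by apply: contraNneq gH_neq0 => ->; rewrite mul0r.
by have := g_max gx_common; rewrite tdegM ?(tdeg_neq0 x1) //; lia.
Qed.

Lemma good_combinationP sigma : in_span sigma -> ~ has_multiple_factor sigma ->
  (forall x, irr x -> mdvd x H -> ~ mdvd (g * x) sigma) -> good_combination sigma.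
Proof.
move=> sigma_span sigma_sqf avoid; split=> //; split=> //.
have [W sigmaE] := dvd_span sigma_span; rewrite mulrC in sigmaE.
have coprimeWH f : irr f -> mdvd f W -> mdvd f H -> False.
  move=> f_irr f_W f_H; apply: (avoid f f_irr f_H).
  by rewrite sigmaE; apply: dvdr_mul => //; apply: dvdr_refl.
have [|gamma [gamma0 [r [E [E0 [cop H_gamma0]]]]]] :=
  coprime_cofactors _ gH_neq0 coprimeWH; first by rewrite -sigmaE sqfree_neq0.
exists gamma, gamma0, r; rewrite sigmaE s0E; do 3!split=> //.
have gamma0n0 : gamma0 != 0 by apply: contraNneq gH_neq0 => g0; rewrite E0 g0 mul0r.
by have := mdvd_tdeg H_gamma0 gamma0n0; have := cofactor_deg3; lia.
Qed.

Section FactorList.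
Variables (cH : R) (hl : seq MP).
Hypotheses (cH_neq0 : cH != 0) (hl_irr : forall x, x \in hl -> irr x)
  (HE : H = cH%:MP * \prod_(x <- hl) x).

Lemma factor_list_avoid sigma : (forall x, x \in hl -> ~ mdvd (g * x) sigma) ->
  forall f, irr f -> mdvd f H -> ~ mdvd (g * f) sigma.
Proof.
move=> avoid f f_irr f_H gf_sigma; rewrite HE in f_H.
have [x x_hl x_f] := irr_dvd_prod f_irr cH_neq0 hl_irr f_H.
apply: (avoid x x_hl); apply: dvdr_trans gf_sigma.
by apply: dvdr_mul => //; apply: dvdr_refl.
Qed.

Lemma exists_span_avoiding : exists2 q, in_span q &
  forall x, x \in hl -> ~ mdvd (g * x) q.
Proof.
have escapes j : (j < size hl)%N ->
    exists2 v, in_span v & ~ mdvd (g * nth 0 hl j) v.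
  move=> /(mem_nth 0) x_hl; apply: factor_escapes; first exact: (hl_irr x_hl).1.
  by rewrite HE; apply: dvdr_mull; apply: (@dvdr_prod_mem _ _ hl (fun x => x) _ x_hl).
have [q q_span q_ok] := avoid_finite in_span_lin_closed in_span0
  (fun j _ => @mdvd_lin_closed _ (g * nth 0 hl j)) escapes.
exists q => // x x_hl; rewrite -(nth_index 0 x_hl); apply: q_ok.
by rewrite index_mem.
Qed.

Lemma exists_good_combination : exists sigma, in_span sigma /\
  ~ has_multiple_factor sigma /\ forall x, x \in hl -> ~ mdvd (g * x) sigma.
Proof.
have [q q_span q_ok] := exists_span_avoiding.
set p := s (lift ord0 ord0); have p_sqf : ~ has_multiple_factor p by apply: s_sqfree.
case: (classic (exists i : 'I_2, p * mderiv i q != mderiv i p * q)) => [[i Kn0]|W0].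
  have Ds_q D : D \in [seq g * x | x <- hl] -> ~ mdvd D q.
    by move=> /mapP [x x_hl ->]; apply: q_ok.
  have [m [sigma_sqf sigma_ok]] := pencil_sqfree p_sqf Kn0 Ds_q.
  exists (p + m%:R *: q); split; first by rewrite -[p]scale1r; apply: in_span_lin_closed => //;
    apply: in_span_gen.
  by split=> // x x_hl; apply: sigma_ok; apply: map_f.
have [c qE] : exists c : R, q = c *: p.
  apply: (wronskian_eq0_proportional p_sqf) => i; apply/eqP; apply: contraT => Kn0.
  by exfalso; apply: W0; exists i.
exists p; split; first exact: in_span_gen.
by split=> // x x_hl gx_p; apply: (q_ok x x_hl); rewrite qE; apply: mdvdZ.
Qed.

End FactorList.
End GreatestCommonDivisor.
End Construction.

Theorem mainTheorem7 (R : realType) (k : nat) (s : 'I_7 -> {mpoly R[2]}) :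
  lin_indep s ->
  (forall i, tdeg (s i) = k) ->
  (forall i, ~ has_multiple_factor (s i)) ->
  exists sigma : {mpoly R[2]},
    (exists c : 'I_6 -> R, sigma = \sum_(i < 6) c i *: s (lift ord0 i)) /\
    ~ has_multiple_factor sigma /\
    exists gamma gamma0 r : {mpoly R[2]},
      sigma = gamma * r /\ s ord0 = gamma0 * r /\
      rel_prime gamma gamma0 /\ (3 <= tdeg gamma0)%N.
Proof.
move=> s_indep s_deg s_sqfree.
have [g [[[H s0E] g_dvd] g_max]] := exists_gcd s_indep.
rewrite mulrC in s0E.
have [cH [hl [cH_neq0 [hl_irr HE]]]] := irr_factorization (H_neq0 s_indep s0E).
have [sigma [sigma_span [sigma_sqf sigma_ok]]] :=
  exists_good_combination s_indep s_sqfree s0E g_max hl_irr HE.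
have : good_combination s sigma.
  apply: (good_combinationP s_indep s_deg s0E g_dvd) => //.
  exact: factor_list_avoid cH_neq0 hl_irr HE sigma sigma_ok.
by exists sigma.
Qed.
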